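(* Let $\mathcal{R}$ be a cell space and let $E$ be a nonempty subset of $G/G_0$. Put $E'=\{g(g')^{-1}G_0: e,e'\in E,\ g\in e,\ g'\in e'\}$. Then there exists an $(E,E')$-tiling of $\mathcal{R}$.
   Context: A cell space $\mathcal{R}$ consists of a group $G$ acting transitively on the left on a nonempty set $M$ via $\triangleright$, a point $m_0\in M$ and a family $(g_{m_0,m})_{m\in M}$ in $G$ with $g_{m_0,m}\triangleright m_0=m$. $G_0$ is the stabiliser of $m_0$ and $G/G_0$ the set of left cosets (elements of $G/G_0$ are subsets of $G$). The right semi-action $\triangleleft\colon M\times G/G_0\to M$ is $m\triangleleft gG_0=g_{m_0,m}g\triangleright m_0$; for $E\subseteq G/G_0$, $m\triangleleft E=\{m\triangleleft e:e\in E\}$. For $E,E'\subseteq G/G_0$, a subset $T\subseteq M$ is an $(E,E')$-tiling of $\mathcal{R}$ if the family $(t\triangleleft E)_{t\in T}$ is pairwise disjoint and the family $(t\triangleleft E')_{t\in T}$ covers $M$. *)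

Set Implicit Arguments.

Record group := Group {
  gcar :> Type;
  gmul : gcar -> gcar -> gcar;
  gone : gcar;
  ginv : gcar -> gcar;
  gmulA : forall x y z, gmul x (gmul y z) = gmul (gmul x y) z;
  gmul1l : forall x, gmul gone x = x;
  gmul1r : forall x, gmul x gone = x;
  gmulVl : forall x, gmul (ginv x) x = gone;
  gmulVr : forall x, gmul x (ginv x) = gone
}.

Record cell_space := CellSpace {
  cs_G : group;
  cs_M : Type;
  cs_act : cs_G -> cs_M -> cs_M;
  cs_act1 : forall m, cs_act (gone cs_G) m = m;
  cs_actM : forall g h m, cs_act (gmul cs_G g h) m = cs_act g (cs_act h m);
  cs_trans : forall m m', exists g, cs_act g m = m';
  cs_m0 : cs_M;
  cs_gm : cs_M -> cs_G;
  cs_gmP : forall m, cs_act (cs_gm m) cs_m0 = m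
}.

Section CellSpaceDefs.
Variable R : cell_space.
Local Notation G := (cs_G R).
Local Notation M := (cs_M R).

Definition stab0 : G -> Prop := fun g => cs_act R g (cs_m0 R) = cs_m0 R.

Definition lcoset (g : G) : G -> Prop :=
  fun x => exists h, stab0 h /\ x = gmul G g h.

Definition coset := { S : G -> Prop | exists g, S = lcoset g }.

(** Right semi-action m <| gG_0 = g_{m0,m} g |> m0, i.e. the value of
    (g_{m0,m} g) |> m0 for any representative g of the coset e. *)
Definition rsemi (m : M) (e : coset) (m' : M) : Prop :=
  exists g, proj1_sig e g /\ m' = cs_act R (gmul G (cs_gm R m) g) (cs_m0 R).

Definition rsemi_set (m : M) (E : coset -> Prop) : M -> Prop :=
  fun m' => exists e, E e /\ rsemi m e m'.

Definition tiling (E E' : coset -> Prop) (T : M -> Prop) : Prop :=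
  (forall t t', T t -> T t' -> t <> t' ->
     forall m, ~ (rsemi_set t E m /\ rsemi_set t' E m)) /\
  (forall m, exists t, T t /\ rsemi_set t E' m).

Definition diff_set (E : coset -> Prop) : coset -> Prop :=
  fun c => exists e e' g g', E e /\ E e' /\ proj1_sig e g /\ proj1_sig e' g' /\
     proj1_sig c = lcoset (gmul G g (ginv G g')).

End CellSpaceDefs.

(** A maximal family T of points whose tiles t <| E are pairwise disjoint
    exists by Zorn's lemma.  It is E'-covering: for every m, maximality forces
    m <| E to meet some t <| E with t in T, and whenever t <| E and m <| E
    share a point, m lies in t <| E'. *)

From mathcomp Require Import all_boot.
From mathcomp Require Import boolp classical_sets.

Set Implicit Arguments.
Unset Strict Implicit.

Section MaximalTrivIset.
Variables (I T : Type) (F : I -> set T).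
Local Open Scope classical_set_scope.

Lemma ex_maximal_trivIset :
  exists A, trivIset A F /\ forall B, A `<` B -> ~ trivIset B F.
Proof.
apply: Zorn_bigcup => D DtrivI Dtot i j [X DX Xi] [Y DY Yj].
have [XY|YX] := Dtot X Y DX DY.
- by apply: (DtrivI Y DY) => //; apply: XY.
- by apply: (DtrivI X DX) => //; apply: YX.
Qed.

Lemma maximal_trivIset_meets (A : set I) i :
  trivIset A F -> (forall B, A `<` B -> ~ trivIset B F) -> F i !=set0 ->
  exists2 j, A j & F j `&` F i !=set0.
Proof.
move=> AtrivI Amax [x Fix].
have [Ai|nAi] := pselect (A i); first by exists i => //; exists x.
apply: contrapT => nmeet; apply: (Amax (A `|` [set i])).
  split; first by move=> j Aj; left.
  by move=> /(_ i (or_intror erefl)).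
move=> j k [Aj|->] [Ak|->] // meet.
- exact: AtrivI.
- by exfalso; apply: nmeet; exists j.
- by exfalso; apply: nmeet; exists k => //; rewrite setIC.
Qed.

End MaximalTrivIset.

Section CellSpace.
Variable R : cell_space.
Local Notation G := (cs_G R).
Local Notation act := (cs_act R).
Local Notation m0 := (cs_m0 R).
Local Notation gm := (cs_gm R).
Local Notation mul := (gmul G).
Local Notation inv := (ginv G).
Local Open Scope classical_set_scope.

Lemma act_invK g x : act (inv g) (act g x) = x.
Proof. by rewrite -cs_actM gmulVl cs_act1. Qed.

Lemma lcoset_refl g : lcoset R g g.
Proof. by exists (gone G); split; [exact: cs_act1 | rewrite gmul1r]. Qed.

Lemma coset_act_mem (e : coset R) g a :
  proj1_sig e g -> act a m0 = act g m0 -> proj1_sig e a.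
Proof.
case: e => S [g0 HS]; rewrite /= HS => -[h [stab_h ->]] Ha.
exists (mul h (mul (inv (mul g0 h)) a)); split.
  by rewrite /stab0 !cs_actM Ha act_invK.
by rewrite !gmulA gmulVr gmul1l.
Qed.

Lemma rsemi_set_nonempty (E : coset R -> Prop) m :
  (exists e, E e) -> rsemi_set m E !=set0.
Proof.
move=> [e Ee].
have [g eg] : exists g, proj1_sig e g.
  by case: e Ee => S [g HS] _; exists g; rewrite /= HS; exact: lcoset_refl.
by exists (act (mul (gm m) g) m0), e; split=> //; exists g.
Qed.

(* The witness is the coset of g_{m0,t}^{-1} g_{m0,m}, written as a g'^{-1}
   with a in e the representative that moves the common point back from t. *)
Lemma rsemi_set_diff (E : coset R -> Prop) t m x :
  rsemi_set t E x -> rsemi_set m E x -> rsemi_set t (diff_set E) m.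
Proof.
move=> [e [Ee [g [eg ->]]]] [e' [Ee' [g' [eg' Hx]]]].
pose a := mul (inv (gm t)) (mul (gm m) g').
have ea : proj1_sig e a.
  by apply: (coset_act_mem eg); rewrite /a cs_actM -Hx cs_actM act_invK.
have a_g' : mul a (inv g') = mul (inv (gm t)) (gm m).
  by rewrite /a -!gmulA gmulVr gmul1r.
have is_coset : exists g0, lcoset R (mul a (inv g')) = lcoset R g0 by eexists.
exists (exist _ (lcoset R (mul a (inv g'))) is_coset); split.
  by exists e, e', a, g'.
exists (mul a (inv g')); split; first exact: lcoset_refl.
by rewrite a_g' gmulA gmulVr gmul1l cs_gmP.
Qed.

End CellSpace.

Theorem theorem2 (R : cell_space) (E : coset R -> Prop) :
  (exists e, E e) ->
  exists T : cs_M R -> Prop, tiling E (diff_set E) T.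
Proof.
move=> E_nonempty.
have [T [T_disj T_max]] := ex_maximal_trivIset (fun t => rsemi_set t E).
exists T; split.
  move=> t t' Tt Tt' tt' m [Htm Ht'm].
  by apply: tt'; apply: T_disj => //; exists m.
move=> m.
have [t Tt [x [Htx Hmx]]] :=
  maximal_trivIset_meets T_disj T_max (rsemi_set_nonempty m E_nonempty).
by exists t; split=> //; exact: rsemi_set_diff Htx Hmx.
Qed.
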